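(* Let $n\neq 5$. Then $V(n,2)=\bigcup_{l=1}^{\lfloor n/2\rfloor}W_l$, and this union is a mutually disjoint union of the $W_l$.
   Context: Let $S=K[x_1,\ldots,x_n]$ over a field $K$; $G(I)$ is the minimal monomial generating set of a monomial ideal $I$. With $\sigma$ the bijection $x_{i_1}\cdots x_{i_k}\mapsto\{i_1,\ldots,i_k\}$ from square-free monomials to subsets of $[n]$, the facet complex $\delta_{\mathcal{F}}(I)$ has facets $\sigma(g)$, $g\in G(I)$, the Stanley–Reisner complex is $\delta_{\mathcal{N}}(I)=\{\sigma(g)\mid g \text{ square-free monomial},\ g\notin I\}$, and a square-free monomial ideal $I$ is an $f$-ideal if both complexes have the same $f$-vector. $V(n,2)$ is the set of $f$-ideals of $S$ all of whose minimal generators have degree $2$. For a nonempty proper $B\subset[n]$ with complement $\overline B$, $W_B=\{x_ix_j\mid i\neq j,\ i,j\in B\text{ or } i,j\in\overline B\}$. An $f$-ideal $I$ with $G(I)$ consisting of square-free monomials of degree 2 is of $l$ type if $W_B\subseteq G(I)$ for some $B\subseteq[n]$ with $|B|=l$; $W_l$ denotes the set of $f$-ideals of $S$ of $l$ type. *)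

(* Combinatorial encoding of square-free monomial ideals of
   S = K[x_1..x_n]: via sigma, a square-free monomial ideal I is determined by
   its minimal generating set G(I), encoded as the set {sigma(g) | g in G(I)}
   of subsets of [n] = 'I_n (an antichain).  A square-free monomial m lies in I
   iff some generator divides m, i.e. sigma(g) \subset sigma(m) for some g. *)
From mathcomp Require Import all_boot.
Set Implicit Arguments. Unset Strict Implicit. Unset Printing Implicit Defensive.

Definition min_gens (n : nat) (G : {set {set 'I_n}}) : Prop :=
  forall A B, A \in G -> B \in G -> A \subset B -> A = B.

Definition facet_complex (n : nat) (G : {set {set 'I_n}}) : {set {set 'I_n}} :=
  [set F : {set 'I_n} | [exists g in G, F \subset g]].

(* Stanley-Reisner complex: sigma(m) for square-free monomials m not in I *)
Definition sr_complex (n : nat) (G : {set {set 'I_n}}) : {set {set 'I_n}} :=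
  [set F : {set 'I_n} | [forall g in G, ~~ (g \subset F)]].

(* f-vector entry: number of faces with k vertices (dimension k-1) *)
Definition fvec (n : nat) (C : {set {set 'I_n}}) (k : nat) : nat :=
  #|[set F in C | #|F| == k]|.

Definition f_ideal (n : nat) (G : {set {set 'I_n}}) : Prop :=
  min_gens G /\ forall k, fvec (facet_complex G) k = fvec (sr_complex G) k.

Definition in_V2 (n : nat) (G : {set {set 'I_n}}) : Prop :=
  f_ideal G /\ forall g, g \in G -> #|g| = 2.

Definition W_B (n : nat) (B : {set 'I_n}) : {set {set 'I_n}} :=
  [set e : {set 'I_n} | (#|e| == 2) && ((e \subset B) || (e \subset ~: B))].

Definition in_W (n l : nat) (G : {set {set 'I_n}}) : Prop :=
  in_V2 G /\ exists B : {set 'I_n},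
    [/\ 0 < #|B| < n, #|B| = l & W_B B \subset G].

(* Let H be the graph on [n] whose edges are the pairs {i, j} with x_i x_j
   not a generator.  Comparing the f-vectors of an ideal generated in degree
   2 in face sizes 0, 2 and 3 shows that I is in V(n,2) iff H is triangle-free
   and has exactly half of the n(n-1)/2 pairs as edges; moreover W_B is
   contained in G(I) iff (B, ~B) is a bipartition of H.
   A triangle-free graph on k vertices that is not bipartite has k >= 5 and at
   most (k-1)^2/4 + 1 edges: delete a vertex w of minimum degree; if what is
   left is bipartite, the neighbours of w meet both sides and, H being
   triangle-free, no edge joins neighbours on opposite sides.  With n(n-1)/4
   edges this forces n = 5, so for n <> 5 the graph H is bipartite and I is of
   l type for l the size of the smaller side.  If B1 and B2 both bipartition H,
   every edge of H joins B1 :&: B2 to the complement of B1 :|: B2 or B1 :\: B2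
   to B2 :\: B1; counting these pairs against n(n-1)/4 forces B1 and B2 to
   be equal or complementary, hence |B1| = |B2| when both are at most n/2. *)

From mathcomp Require Import all_boot zify.
Set Implicit Arguments. Unset Strict Implicit. Unset Printing Implicit Defensive.

Lemma edge_bound_induction_arith k m d :
  5 <= k -> 2 * m + 2 * k <= k * k + 5 -> k.+1 * d <= m + 2 * d ->
  2 * (m + 2 * d) + 2 * k.+1 <= k.+1 * k.+1 + 5.
Proof.
move=> k5 bound mind.
have [k5' | k6] : k = 5 \/ 6 <= k by lia.
  subst k; lia.
nia.
Qed.

Lemma edge_bound_bipartite_arith a b s t m :
  1 <= s <= a -> 1 <= t <= b -> m + 2 * (s * t) <= 2 * (a * b) + 2 * (s + t) ->
  (a + b).+1 * (s + t) <= m ->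
  5 <= (a + b).+1 /\ 2 * m + 2 * (a + b).+1 <= (a + b).+1 * (a + b).+1 + 5.
Proof.
move=> hs ht hm mind.
have st : s + t <= s * t + 1 by nia.
have := (nat_AGM2 a b).1; rewrite -mulnn.
split; last by nia.
have ab : a + b <= a * b by nia.
have [a1 | a2] : a = 1 \/ 2 <= a by lia.
  subst a; lia.
have [b1 | b2] : b = 1 \/ 2 <= b by lia.
  subst b; lia.
lia.
Qed.

Lemma bipartition_card_arith n p q z w :
  n * n - n <= 4 * (p * q + z * w) -> p + q + z + w = n ->
  p + z <= n./2 -> p + w <= n./2 -> z = w.
Proof.
move=> pairs sum hz hw.
have := (nat_AGM2 p q).1; have := (nat_AGM2 z w).1; rewrite -!mulnn => agm1 agm2.
have cross : 2 * ((p + q) * (z + w)) <= n by nia.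
have [pq0 | pq1] : p + q = 0 \/ 1 <= p + q by lia.
  lia.
have [zw0 | zw1] : z + w = 0 \/ 1 <= z + w by lia.
  lia.
nia.
Qed.

Section Graphs.
Variables (T : finType) (r : rel T).

Definition degree (U : {set T}) x := #|[set y in U | r x y]|.

Definition edge_pairs (U : {set T}) :=
  [set p : T * T | [&& p.1 \in U, p.2 \in U & r p.1 p.2]].

Definition bipartition (U X : {set T}) :=
  [forall x in U, forall y in U, r x y ==> ((x \in X) != (y \in X))].

Definition bipartite (U : {set T}) := [exists X, bipartition U X].

Lemma bipartitionP (U X : {set T}) :
  reflect {in U &, forall x y, r x y -> (x \in X) != (y \in X)} (bipartition U X).
Proof.
apply: (iffP forall_inP) => [h x y xU yU rxy | h x xU].
  by move: (h x xU) => /forall_inP/(_ y yU)/implyP/(_ rxy).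
by apply/forall_inP => y yU; apply/implyP => rxy; apply: h.
Qed.

Lemma card_edge_pairs (U : {set T}) : #|edge_pairs U| = \sum_(x in U) degree U x.
Proof.
rewrite -sum1dep_card.
rewrite -(pair_big_dep (fun x => x \in U) (fun x y => (y \in U) && r x y) (fun _ _ => 1)) /=.
by apply: eq_bigr => x _; rewrite sum1dep_card; apply: eq_card => y; rewrite !inE.
Qed.

Lemma bipartitionC (U X : {set T}) : bipartition U X -> bipartition U (~: X).
Proof.
move/bipartitionP=> bX; apply/bipartitionP => x y xU yU rxy.
by rewrite !inE; have := bX x y xU yU rxy; case: (x \in X); case: (y \in X).
Qed.

Lemma card_edge_pairs_two_bipartitions (X1 X2 : {set T}) :
  bipartition setT X1 -> bipartition setT X2 ->
  #|edge_pairs setT| <=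
    2 * (#|X1 :&: X2| * #|~: (X1 :|: X2)| + #|X1 :\: X2| * #|X2 :\: X1|).
Proof.
move=> /bipartitionP bX1 /bipartitionP bX2.
set P := X1 :&: X2; set Q := ~: (X1 :|: X2); set Z := X1 :\: X2; set W := X2 :\: X1.
have sub : edge_pairs setT \subset ((setX P Q :|: setX Q P) :|: setX Z W) :|: setX W Z.
  apply/subsetP => -[x y]; rewrite inE /= => /and3P[_ _ rxy].
  have := bX1 x y (in_setT x) (in_setT y) rxy.
  have := bX2 x y (in_setT x) (in_setT y) rxy.
  rewrite !inE /=.
  by case: (x \in X1); case: (y \in X1); case: (x \in X2); case: (y \in X2).
have := subset_leq_card sub.
have [+ _] := leq_card_setU ((setX P Q :|: setX Q P) :|: setX Z W) (setX W Z).
have [+ _] := leq_card_setU (setX P Q :|: setX Q P) (setX Z W).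
have [+ _] := leq_card_setU (setX P Q) (setX Q P).
rewrite !cardsX; lia.
Qed.

Lemma bipartition_card_uniq (X1 X2 : {set T}) :
  2 * #|edge_pairs setT| = #|T| * #|T| - #|T| ->
  bipartition setT X1 -> bipartition setT X2 ->
  #|X1| <= #|T|./2 -> #|X2| <= #|T|./2 -> #|X1| = #|X2|.
Proof.
move=> pairs bX1 bX2.
have edges := card_edge_pairs_two_bipartitions bX1 bX2.
have cardX1 : #|X1 :&: X2| + #|X1 :\: X2| = #|X1| by rewrite cardsID.
have cardX2 : #|X1 :&: X2| + #|X2 :\: X1| = #|X2| by rewrite setIC cardsID.
have cover := cardsUI X1 X2; have cardC := cardsC (X1 :|: X2).
rewrite -cardX1 -cardX2 => hX1 hX2; congr (_ + _).
by apply: (bipartition_card_arith (q := #|~: (X1 :|: X2)|) _ _ hX1 hX2); lia.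
Qed.

Lemma bipartition_half (X : {set T}) : 0 < #|edge_pairs setT| -> bipartition setT X ->
  exists Y, [/\ bipartition setT Y, 0 < #|Y| & #|Y| <= #|T|./2].
Proof.
case/card_gt0P => -[x y]; rewrite inE /= => /and3P[_ _ rxy] bX.
have side_gt0 Y : bipartition setT Y -> 0 < #|Y|.
  move/bipartitionP/(_ x y (in_setT x) (in_setT y) rxy) => sides.
  by rewrite card_gt0; apply: contraTneq sides => ->; rewrite !inE.
have cardX := cardsC X.
have [Xhalf | Xbig] := leqP #|X| #|T|./2; first by exists X; rewrite side_gt0.
have := odd_double_half #|T|; rewrite -muln2 => halfT.
exists (~: X); split; [exact: bipartitionC | | lia].
by rewrite side_gt0 // bipartitionC.
Qed.

Hypotheses (r_sym : symmetric r) (r_irr : irreflexive r).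

Lemma card_edge_pairsD1 (U : {set T}) w : w \in U ->
  #|edge_pairs U| = #|edge_pairs (U :\ w)| + 2 * degree U w.
Proof.
move=> wU; rewrite !card_edge_pairs (bigD1 w) //=.
rewrite (eq_bigl (fun x => x \in U :\ w)) => [|x]; last by rewrite !inE andbC.
have degD1 x : x \in U :\ w -> degree U x = degree (U :\ w) x + r x w.
  move=> xUw; rewrite /degree (cardsD1 w) inE wU /= addnC; congr (_ + _).
  by apply: eq_card => y; rewrite !inE andbA.
rewrite (eq_bigr _ degD1) big_split /=.
have -> : \sum_(x in U :\ w) (r x w : nat) = degree U w.
  rewrite /degree -sum1dep_card [RHS]big_mkcond [LHS]big_mkcond /=.
  apply: eq_bigr => y _; rewrite !inE r_sym.
  by have [->|_] := eqVneq y w; rewrite ?r_irr ?andbF //; case: (y \in U) (r w y) => -[].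
lia.
Qed.

Lemma bipartition_extend (U X : {set T}) w (b : bool) : w \in U ->
  bipartition (U :\ w) X -> {in U, forall y, r w y -> (y \in X) != b} ->
  bipartite U.
Proof.
move=> wU /bipartitionP bX bw; apply/existsP.
exists [set x | if x == w then b else x \in X]; apply/bipartitionP => x y xU yU rxy.
rewrite !inE; have [exw | xw] := eqVneq x w; have [eyw | yw] := eqVneq y w.
- by subst; rewrite r_irr in rxy.
- by subst x; rewrite eq_sym bw.
- by subst y; apply: bw; rewrite // r_sym.
- by apply: bX; rewrite // in_setD1 ?xw ?yw.
Qed.

Lemma nonbipartite_neighbours (U X : {set T}) w : w \in U -> ~~ bipartite U ->
  bipartition (U :\ w) X ->
  0 < #|[set y in U | r w y] :&: X| /\ 0 < #|[set y in U | r w y] :\: X|.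
Proof.
move=> wU nbU bX; rewrite !card_gt0; split; apply: contraNN nbU => /eqP N0.
- apply: (bipartition_extend (b := true) wU bX) => y yU rwy.
  by case yX: (y \in X) => //; have := in_set0 y; rewrite -N0 !inE yU rwy yX.
- apply: (bipartition_extend (b := false) wU bX) => y yU rwy.
  by case yX: (y \in X) => //; have := in_set0 y; rewrite -N0 !inE yU rwy yX.
Qed.

Lemma card_edge_pairs_bipartition (U X S R : {set T}) : bipartition U X ->
  S \subset U :&: X -> R \subset U :\: X -> {in S & R, forall s t, ~~ r s t} ->
  #|edge_pairs U| + 2 * (#|S| * #|R|) <= 2 * (#|U :&: X| * #|U :\: X|).
Proof.
move=> /bipartitionP bX SA RB nSR.
pose AB := setX (U :&: X) (U :\: X) :\: setX S R.
pose BA := setX (U :\: X) (U :&: X) :\: setX R S.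
have sub : edge_pairs U \subset AB :|: BA.
  apply/subsetP => -[x y]; rewrite !inE /= => /and3P[xU yU rxy].
  have := bX x y xU yU rxy; rewrite xU yU /=.
  case: (x \in X); case: (y \in X) => //= _; rewrite ?andbT ?andbF ?orbF;
    apply/negP => /andP[xSR ySR]; [have := nSR _ _ xSR ySR | have := nSR _ _ ySR xSR];
    by rewrite ?rxy // r_sym rxy.
have cardAB : #|AB| = #|U :&: X| * #|U :\: X| - #|S| * #|R|.
  by rewrite /AB [LHS]cardsDS ?setXS // !cardsX.
have cardBA : #|BA| = #|U :\: X| * #|U :&: X| - #|R| * #|S|.
  by rewrite /BA [LHS]cardsDS ?setXS // !cardsX.
have SR_AB : #|S| * #|R| <= #|U :&: X| * #|U :\: X|.
  by apply: leq_mul; apply: subset_leq_card.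
have [ABBA _] := leq_card_setU AB BA.
have := subset_leq_card sub; lia.
Qed.

Hypothesis r_triangle_free : forall x y z, r x y -> r y z -> r x z -> False.

Lemma edge_bound_bipartite_removal (U X : {set T}) w : w \in U -> ~~ bipartite U ->
  bipartition (U :\ w) X -> #|U| * degree U w <= #|edge_pairs U| ->
  5 <= #|U| /\ 2 * #|edge_pairs U| + 2 * #|U| <= #|U| * #|U| + 5.
Proof.
move=> wU nbU bX min_sum; set N := [set y in U | r w y].
have NUw : N \subset U :\ w.
  apply/subsetP => y; rewrite !inE => /andP[yU rwy]; rewrite yU andbT.
  by apply: contraTneq rwy => ->; rewrite r_irr.
have N_indep : {in N :&: X & N :\: X, forall s t, ~~ r s t}.
  move=> s t; rewrite !inE => /andP[/andP[_ rws] _] /andP[_ /andP[_ rwt]].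
  by apply/negP => rst; apply: (r_triangle_free rws rst rwt).
have count := card_edge_pairs_bipartition bX (setSI X NUw) (setSD X NUw) N_indep.
have [S0 R0] := nonbipartite_neighbours wU nbU bX; rewrite -/N in S0 R0.
have SA := subset_leq_card (setSI X NUw); have RB := subset_leq_card (setSD X NUw).
have cardU : #|(U :\ w) :&: X| + #|(U :\ w) :\: X| + 1 = #|U|.
  by rewrite cardsID [RHS](cardsD1 w) wU addnC.
have degN : degree U w = #|N :&: X| + #|N :\: X| by rewrite cardsID.
have edgesD1 := card_edge_pairsD1 wU.
rewrite -cardU addn1; apply: (edge_bound_bipartite_arith (s := #|N :&: X|) (t := #|N :\: X|)).
- by rewrite S0 SA.
- by rewrite R0 RB.
- by rewrite edgesD1 -degN; lia.
- by rewrite -addn1 cardU -degN.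
Qed.

(* [edge_pairs] counts each edge twice: this is |E| <= ((|U| - 1)^2 + 4) / 4. *)
Lemma nonbipartite_edge_bound (U : {set T}) : ~~ bipartite U ->
  5 <= #|U| /\ 2 * #|edge_pairs U| + 2 * #|U| <= #|U| * #|U| + 5.
Proof.
move: {2}#|U| (erefl #|U|) => k; elim: k U => [|k IH] U cardU nbU.
  case/negP: nbU; apply/existsP; exists set0; apply/bipartitionP => x.
  by move/eqP: cardU; rewrite cards_eq0 => /eqP->; rewrite inE.
have [w0 w0U] : exists w0, w0 \in U by apply/card_gt0P; rewrite cardU.
have [w wU wmin] := arg_minnP (degree U) w0U; have {}wU : w \in U := wU.
have min_sum : #|U| * degree U w <= #|edge_pairs U|.
  by rewrite card_edge_pairs -sum_nat_const leq_sum.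
have [/existsP[X bX] | nbUw] := boolP (bipartite (U :\ w)).
  exact: edge_bound_bipartite_removal wU nbU bX min_sum.
have cardUw : #|U :\ w| = k by move: cardU; rewrite (cardsD1 w) wU => -[].
have [k5 bound] := IH _ cardUw nbUw; rewrite cardUw in k5 bound.
have edgesD1 := card_edge_pairsD1 wU.
rewrite cardU in min_sum *; split; first by lia.
by rewrite edgesD1; apply: edge_bound_induction_arith k5 bound _; rewrite -edgesD1.
Qed.

End Graphs.

Lemma card_offdiag (T : finType) :
  #|[set p : T * T | p.1 != p.2]| = #|T| * #|T| - #|T|.
Proof.
have diag : #|[set (x, x) | x : T]| = #|T| by rewrite card_imset // => x y [].
have offdiag : ~: [set (x, x) | x : T] = [set p : T * T | p.1 != p.2].
  apply/setP => -[x y]; rewrite !inE /=; apply/idP/idP => [|xy].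
    by apply: contraNneq => ->; apply: imset_f.
  by apply/imsetP => -[z _ [exz eyz]]; rewrite exz eyz eqxx in xy.
have := cardsC [set (x, x) | x : T]; rewrite card_prod diag offdiag; lia.
Qed.

Lemma set2_eqE (T : finType) (a b x y : T) : a != b ->
  ([set x; y] == [set a; b]) = ((x, y) == (a, b)) || ((x, y) == (b, a)).
Proof.
move=> ab; apply/eqP/idP => [exy | /orP[] /eqP[-> ->] //]; last by rewrite setUC.
have xy : x != y.
  by apply/eqP => eyx; have := cards2 a b; rewrite -exy eyx setUid cards1 ab.
have xab : x \in [set a; b] by rewrite -exy set21.
have yab : y \in [set a; b] by rewrite -exy set22.
by move: xab yab xy => /set2P[]-> /set2P[]->; rewrite ?eqxx ?orbT.
Qed.

Lemma card_pairs_set2 (T : finType) (E : {set {set T}}) :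
  {in E, forall e : {set T}, #|e| = 2} ->
  #|[set p : T * T | [set p.1; p.2] \in E]| = 2 * #|E|.
Proof.
move=> E2; rewrite -sum1dep_card.
rewrite (partition_big (fun p : T * T => [set p.1; p.2]) (mem E)) //=.
rewrite mulnC -sum_nat_const; apply: eq_bigr => e eE.
have /cards2P [a [b [ab e_ab]]] : #|e| == 2 by rewrite E2.
subst e.
have pairs2 : #|[set (a, b); (b, a)]| = 2 by rewrite cards2 xpair_eqE (negbTE ab).
rewrite sum1dep_card -pairs2; apply: eq_card => -[x y]; rewrite !inE /= set2_eqE //.
by case: orP => [[] /eqP[-> ->] | _]; rewrite ?andbF // ?(setUC [set b]) eE.
Qed.

Definition nonedge (T : finType) (G : {set {set T}}) : rel T :=
  fun x y => (x != y) && ([set x; y] \notin G).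

Lemma nonedge_sym (T : finType) (G : {set {set T}}) : symmetric (nonedge G).
Proof. by move=> x y; rewrite /nonedge eq_sym setUC. Qed.

Lemma nonedge_irr (T : finType) (G : {set {set T}}) : irreflexive (nonedge G).
Proof. by move=> x; rewrite /nonedge eqxx. Qed.

Lemma W_B_subset_bipartition n (G : {set {set 'I_n}}) (X : {set 'I_n}) :
  (W_B X \subset G) = bipartition (nonedge G) setT X.
Proof.
apply/subsetP/bipartitionP => [WG x y _ _ /andP[xy] | bX e].
  apply: contraNneq => sides; apply: WG.
  by rewrite inE cards2 xy !subUset !sub1set !inE -sides; case: (x \in X).
rewrite inE => /andP[/cards2P[a [b [ab ->]]] same]; apply/negPn/negP => abG.
have := bX a b (in_setT a) (in_setT b); rewrite /nonedge ab abG => /(_ isT).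
by move: same; rewrite !subUset !sub1set !inE; case: (a \in X); case: (b \in X).
Qed.

Section DegreeTwoFIdeals.
Variables (n : nat) (G : {set {set 'I_n}}).
Hypothesis G_V2 : in_V2 G.

Lemma in_V2_gt1 : 1 < n.
Proof.
have [[_ f_eq] G2] := G_V2.
have /card_gt0P[F] : 0 < fvec (facet_complex G) 0.
  rewrite f_eq; apply/card_gt0P; exists set0; rewrite !inE cards0 eqxx andbT.
  by apply/forall_inP => g gG; rewrite subset0 -cards_eq0 G2.
rewrite !inE => /andP[/exists_inP[g gG _] _].
by rewrite -(G2 g gG) -[n in _ <= n]card_ord max_card.
Qed.

Lemma in_V2_card : #|G| = #|[set F : {set 'I_n} | #|F| == 2] :\: G|.
Proof.
have [[_ f_eq] G2] := G_V2.
have sub_gen (F g : {set 'I_n}) : g \in G -> #|F| = 2 ->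
    (F \subset g) = (F == g) /\ (g \subset F) = (g == F).
  by move=> gG F2; rewrite !eqEcard F2 G2 // leqnn !andbT.
transitivity (fvec (facet_complex G) 2); last rewrite f_eq.
  apply: eq_card => F; rewrite !inE; apply/idP/andP => [FG | [/exists_inP[g gG] Fg /eqP F2]].
    by rewrite G2 //; split=> //; apply/exists_inP; exists F.
  by have [eFg _] := sub_gen F g gG F2; move: Fg; rewrite eFg => /eqP->.
apply: eq_card => F; rewrite !inE; case: eqP => F2; rewrite ?andbF ?andbT //.
apply/forall_inP/idP => [noG | FG g gG].
  by apply/negP => FG; move: (noG F FG); rewrite subxx.
by have [_ ->] := sub_gen F g gG F2; apply: contraNN FG => /eqP<-.
Qed.

Lemma in_V2_triangle_free x y z :
  nonedge G x y -> nonedge G y z -> nonedge G x z -> False.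
Proof.
have [[_ f_eq] G2] := G_V2.
move=> nxy nyz nxz; set F := [set x; y; z].
have pairs u v : u \in F -> v \in F -> u != v -> nonedge G u v.
  rewrite !inE => /orP[/orP[]|] /eqP-> /orP[/orP[]|] /eqP->;
    by rewrite ?eqxx // => _; rewrite // nonedge_sym.
have F3 : #|F| = 3.
  case/andP: nxy => xy _; case/andP: nyz => yz _; case/andP: nxz => xz _.
  by rewrite /F setUC cardsU1 cards2 xy !inE negb_or eq_sym xz eq_sym yz.
have facet3 : fvec (facet_complex G) 3 = 0.
  apply/eqP; rewrite cards_eq0; apply/eqP/setP => F'; rewrite !inE.
  apply/negP => /andP[/exists_inP[g gG F'g] /eqP F'3].
  by have := subset_leq_card F'g; rewrite F'3 G2.
move/eqP: facet3; rewrite f_eq cards_eq0 => /eqP/setP/(_ F).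
rewrite !inE F3 eqxx andbT => /negbT/forall_inPn[g gG]; rewrite negbK => gF.
have /cards2P[u [v [uv guv]]] : #|g| == 2 by rewrite G2.
have uF : u \in F by apply: (subsetP gF); rewrite guv set21.
have vF : v \in F by apply: (subsetP gF); rewrite guv set22.
by have /andP[_] := pairs u v uF vF uv; rewrite -guv gG.
Qed.

Lemma in_V2_card_nonedge_pairs : 2 * #|edge_pairs (nonedge G) setT| = n * n - n.
Proof.
have [_ G2] := G_V2.
set E2 := [set F : {set 'I_n} | #|F| == 2].
have E2_2 : {in E2, forall e : {set 'I_n}, #|e| = 2} by move=> e; rewrite inE => /eqP.
have GE2 : E2 :&: G = G.
  by apply/setIidPr/subsetP => g gG; rewrite inE G2.
have edges : edge_pairs (nonedge G) setT = [set p | [set p.1; p.2] \in E2 :\: G].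
  by apply/setP => -[x y]; rewrite !inE /= cards2 /nonedge andbC; case: (x != y).
have offdiag : [set p : 'I_n * 'I_n | p.1 != p.2] = [set p | [set p.1; p.2] \in E2].
  by apply/setP => -[x y]; rewrite !inE cards2; case: (x != y).
have := card_offdiag 'I_n; rewrite card_ord offdiag card_pairs_set2 //.
rewrite edges card_pairs_set2 => [|e /setDP[/E2_2 //]].
have := cardsID G E2; rewrite GE2 -in_V2_card; lia.
Qed.

Lemma in_V2_nonedge_bipartite : n <> 5 -> bipartite (nonedge G) setT.
Proof.
move=> n_ne5; apply: contraT.
move=> /(nonbipartite_edge_bound (@nonedge_sym _ G) (@nonedge_irr _ G) in_V2_triangle_free).
rewrite cardsT card_ord => -[n_ge5 bound].
have pairs := in_V2_card_nonedge_pairs; case: n_ne5; nia.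
Qed.

End DegreeTwoFIdeals.

Theorem theorem4p6 (n : nat) : n <> 5 ->
  (forall G : {set {set 'I_n}},
      in_V2 G <-> exists l, (1 <= l <= n./2)%N /\ in_W l G) /\
  (forall (l1 l2 : nat) (G : {set {set 'I_n}}),
      (1 <= l1 <= n./2)%N -> (1 <= l2 <= n./2)%N ->
      in_W l1 G -> in_W l2 G -> l1 = l2).
Proof.
move=> n_ne5; split=> [G | l1 l2 G /andP[_ hl1] /andP[_ hl2]].
  split=> [G_V2 | [l [_ []]] //].
  have /existsP[X bX] := in_V2_nonedge_bipartite G_V2 n_ne5.
  have pairs := in_V2_card_nonedge_pairs G_V2; have n_gt1 := in_V2_gt1 G_V2.
  have edges0 : 0 < #|edge_pairs (nonedge G) setT| by nia.
  have [Y [bY Y0]] := bipartition_half edges0 bX; rewrite card_ord => Yhalf.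
  have := odd_double_half n; rewrite -muln2 => half_n.
  exists #|Y|; split; first by rewrite Y0.
  by split=> //; exists Y; split; rewrite ?W_B_subset_bipartition //; lia.
move=> [G_V2 [B1 [_ eB1 WB1]]] [_ [B2 [_ eB2 WB2]]]; subst l1 l2.
move: WB1 WB2; rewrite !W_B_subset_bipartition => WB1 WB2.
by apply: bipartition_card_uniq WB1 WB2 _ _; rewrite ?card_ord ?in_V2_card_nonedge_pairs.
Qed.
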